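(* Let $\mathcal{F}$ be a set of flows in the Clos network $C_{N,R}$. For all $i\in[R]$ and all positive integers $k$, the number of flows $f\in\mathcal{F}$ with $i(f)=i$ and $\mathrm{dem}(f)>\tfrac1k\cdot OPT(\mathcal{F})$ is at most $N(k-1)$. Similarly, for all $j\in[R]$ and all positive integers $l$, the number of flows $f\in\mathcal{F}$ with $j(f)=j$ and $\mathrm{dem}(f)>\tfrac1l\cdot OPT(\mathcal{F})$ is at most $N(l-1)$.
   Context: Clos network $C_{N,R}$: a directed graph with $N$ middle switches $M_1,\dots,M_N$, $R$ input switches $I_1,\dots,I_R$, $R$ output switches $O_1,\dots,O_R$, source servers $s_i^k$ and destination servers $t_i^k$ ($i\in[R]$, $k\in[N]$), and edges $s_i^kI_i$, $I_iM_m$, $M_mO_i$, $O_it_i^k$; all links have capacity $1$. A flow $f$ leaves input switch $I_{i(f)}$, enters output switch $O_{j(f)}$, and has positive demand $\mathrm{dem}(f)$; a set of flows has total demand at most $1$ leaving each source server and entering each destination server. A routing $r$ assigns each flow a single middle switch $r(f)\in[N]$; its congestion is $\max_{i\in[R],m\in[N]}\max\{\sum_{f:i(f)=i,r(f)=m}\mathrm{dem}(f),\ \sum_{f:j(f)=i,r(f)=m}\mathrm{dem}(f)\}$; $OPT(\mathcal{F})$ is the minimum congestion over all routings of $\mathcal{F}$. *)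

From HB Require Import structures.
From mathcomp Require Import all_boot all_order all_algebra.
Set Implicit Arguments. Unset Strict Implicit. Unset Printing Implicit Defensive.
Import Order.TTheory GRing.Theory Num.Theory.
Local Open Scope ring_scope.

(* Clos network C_{N,R}: input switches I_i, output switches O_i (i : 'I_R),
   middle switches M_m (m : 'I_N), source servers s_i^k and destination
   servers t_i^k (i : 'I_R, k : 'I_N).  A (finite) set of flows is a finType
   [F]; flow f starts at source server [src f] = (i, k), i.e. s_i^k, so it
   leaves input switch I_{i(f)} with i(f) = (src f).1, and ends at destination
   server [dst f] = (j, l), so it enters output switch O_{j(f)}, j(f) = (dst f).1. *)

Section Clos.
Variables (Rt : realFieldType) (N R : nat) (F : finType).
Variables (src dst : F -> 'I_R * 'I_N) (dem : F -> Rt).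

Definition iflow (f : F) : 'I_R := (src f).1.
Definition jflow (f : F) : 'I_R := (dst f).1.

Definition valid_flows : Prop :=
  (forall f, 0 < dem f) /\
  (forall s : 'I_R * 'I_N, \sum_(f | src f == s) dem f <= 1) /\
  (forall t : 'I_R * 'I_N, \sum_(f | dst f == t) dem f <= 1).

(* A routing assigns every flow a middle switch. *)
Definition routing := {ffun F -> 'I_N}.

Definition congestion (r : routing) : Rt :=
  \big[Num.max/0]_(i : 'I_R) \big[Num.max/0]_(m : 'I_N)
     Num.max (\sum_(f | (iflow f == i) && (r f == m)) dem f)
             (\sum_(f | (jflow f == i) && (r f == m)) dem f).

Definition is_OPT (opt : Rt) : Prop :=
  (exists r : routing, congestion r = opt) /\
  (forall r : routing, opt <= congestion r).
End Clos.

From HB Require Import structures.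
From mathcomp Require Import all_boot all_order all_algebra.
Import Order.TTheory GRing.Theory Num.Theory.

(* Fix an optimal routing.  Through any middle switch, the flows of one input
   switch carry total demand at most OPT, so fewer than k of them can have
   demand above OPT / k (otherwise their demands would sum to more than OPT).
   Summing over the N middle switches gives at most N (k - 1) such flows; the
   output switches are symmetric. *)

Set Implicit Arguments.
Unset Strict Implicit.
Local Open Scope ring_scope.

Section HeavyElements.
Variables (Rt : realFieldType) (I : finType).
Implicit Types (d : I -> Rt) (c : Rt) (k : nat).

Lemma card_lt_of_heavy (A : pred I) d c k :
    0 <= c -> (0 < k)%N -> {in A, forall x, c / k%:R < d x} ->
  \sum_(x in A) d x <= c -> (#|A| < k)%N.
Proof.
move=> c_ge0 k_gt0 heavyA sumA; rewrite ltnNge; apply/negP => k_le_A.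
have A_nonempty : has (mem A) (index_enum I).
  have /card_gt0P [x Ax] := leq_trans k_gt0 k_le_A.
  by apply/hasP; exists x; rewrite ?mem_index_enum.
have c_le : c <= \sum_(x in A) c / k%:R.
  rewrite sumr_const -[_ *+ #|A|]mulr_natr.
  rewrite -{1}(divfK (_ : k%:R != 0) c) ?pnatr_eq0 -?lt0n //.
  by apply: ler_wpM2l; rewrite ?divr_ge0 ?ler_nat.
have := lt_le_trans (le_lt_trans c_le (ltr_sum A_nonempty heavyA)) sumA.
by rewrite ltxx.
Qed.

Lemma card_heavy_le (N : nat) (r : I -> 'I_N) (P : pred I) d c k :
    0 <= c -> (0 < k)%N -> (forall x, 0 <= d x) ->
    (forall m, \sum_(x | P x && (r x == m)) d x <= c) ->
  (#|[set x | P x && (c / k%:R < d x)%R]| <= N * (k - 1))%N.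
Proof.
move=> c_ge0 k_gt0 d_ge0 load.
rewrite -sum1_card (partition_big r predT) // -[N in (N * _)%N]card_ord.
rewrite -sum_nat_const; apply: leq_sum => m _.
rewrite sum1_card subn1 -ltnS prednK //.
apply: (card_lt_of_heavy (d := d) c_ge0 k_gt0) => [x|].
  by rewrite unfold_in inE => /andP[/andP[]].
apply: le_trans (load m).
rewrite [leRHS](bigID (fun x => c / k%:R < d x)) /=.
apply: ler_wpDr; first by apply: sumr_ge0 => x _.
rewrite (eq_bigl (fun x => P x && (r x == m) && (c / k%:R < d x))) //.
by move=> x; rewrite unfold_in inE andbAC.
Qed.

End HeavyElements.

Section Congestion.
Variables (Rt : realFieldType) (N R : nat) (F : finType).
Variables (src dst : F -> 'I_R * 'I_N) (dem : F -> Rt) (r : routing N F).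

Lemma congestion_ge0 : 0 <= congestion src dst dem r.
Proof. exact: bigmax_ge_id. Qed.

Lemma load_le_congestion (i : 'I_R) (m : 'I_N) :
  \sum_(f | (iflow src f == i) && (r f == m)) dem f <= congestion src dst dem r /\
  \sum_(f | (jflow dst f == i) && (r f == m)) dem f <= congestion src dst dem r.
Proof.
suff load_le : Num.max (\sum_(f | (iflow src f == i) && (r f == m)) dem f)
                       (\sum_(f | (jflow dst f == i) && (r f == m)) dem f)
               <= congestion src dst dem r.
  by move: load_le; rewrite ge_max => /andP.
by apply: le_trans (le_bigmax _ _ i); exact: (le_bigmax _ _ m).
Qed.

End Congestion.

Theorem mainTheorem9 (Rt : realFieldType) (N R : nat) (F : finType)
    (src dst : F -> 'I_R * 'I_N) (dem : F -> Rt) (opt : Rt) :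
  valid_flows src dst dem ->
  is_OPT src dst dem opt ->
  (forall (i : 'I_R) (k : nat), (0 < k)%N ->
     (#|[set f : F | (iflow src f == i) && (opt / k%:R < dem f)%R]|
        <= N * (k - 1))%N) /\
  (forall (j : 'I_R) (l : nat), (0 < l)%N ->
     (#|[set f : F | (jflow dst f == j) && (opt / l%:R < dem f)%R]|
        <= N * (l - 1))%N).
Proof.
move=> [dem_gt0 _] [[r <-] _].
have dem_ge0 f : 0 <= dem f by exact: ltW.
have cong_ge0 := congestion_ge0 src dst dem r.
split=> [i|j] k k_gt0.
- apply: (card_heavy_le (r := r) (P := fun f => iflow src f == i)) => // m.
  exact: (load_le_congestion src dst dem r i m).1.
- apply: (card_heavy_le (r := r) (P := fun f => jflow dst f == j)) => // m.
  exact: (load_le_congestion src dst dem r j m).2.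
Qed.
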